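(* For all $\epsilon>0$ and $k\in\mathbb{N}$, let $d=d(\epsilon)=1280\epsilon^{-2}$ and $N=N(\epsilon,k)=1800k\epsilon^{-4}$. Let $D$ be a properly totally coloured digraph on at least $N$ vertices with rainbow vertex set. Then there is a subset $A\subseteq V(D)$ which is $(k,d)$-connected in $D$ (in the coloured sense) and satisfies $|A|\geq\delta^+(D)-\epsilon|D|$.
   Context: Digraphs are finite, without loops and without multiple edges (an edge may appear in both directions). A path is a sequence of distinct vertices $x_1,\dots,x_t$ with each $x_ix_{i+1}$ a directed edge; its length is its number of edges. A total colouring assigns a colour to every vertex and edge; it is proper if outgoing edges at any vertex have distinct colours, ingoing edges at any vertex have distinct colours, adjacent vertices have distinct colours, and every edge has a colour different from both its endpoints. $D$ has rainbow vertex set if all vertices have distinct colours. A path is rainbow if all its vertices and edges have pairwise distinct colours. A set $A\subseteq V(D)$ is $(k,d)$-connected in the totally coloured digraph $D$ if for every set $S$ of at most $k-1$ colours and all $x,y\in A$ there is a rainbow path from $x$ to $y$ of length at most $d$ none of whose edges, and none of whose vertices other than $x,y$, has a colour in $S$. $\delta^+(D)$ is the minimum out-degree, $|D|$ the number of vertices. *)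

From HB Require Import structures.
From mathcomp Require Import all_boot all_order all_algebra.
Set Implicit Arguments. Unset Strict Implicit. Unset Printing Implicit Defensive.

(* A total colouring with colours
   in nat is a vertex colouring cv and an edge colouring ce (ce x y is the
   colour of edge xy; its value on non-edges is irrelevant). *)

Definition digraph (V : finType) (e : rel V) : Prop := irreflexive e.

Definition proper_total_colouring (V : finType) (e : rel V)
    (cv : V -> nat) (ce : V -> V -> nat) : Prop :=
  [/\ (forall x y z, e x y -> e x z -> y != z -> ce x y != ce x z),
      (forall x y z, e y x -> e z x -> y != z -> ce y x != ce z x),
      (forall x y, e x y -> cv x != cv y) &
      (forall x y, e x y -> (ce x y != cv x) && (ce x y != cv y))].

Definition rainbow_vertex_set (V : finType) (cv : V -> nat) : Prop :=
  injective cv.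

(* The path x :: p (vertices x, p_1, ..., p_t), of length size p. *)
Definition is_path (V : finType) (e : rel V) (x : V) (p : seq V) : bool :=
  path e x p && uniq (x :: p).

Definition path_vcols (V : finType) (cv : V -> nat) (x : V) (p : seq V) :=
  map cv (x :: p).
Definition path_ecols (V : finType) (ce : V -> V -> nat) (x : V) (p : seq V) :=
  pairmap ce x p.

Definition rainbow_path (V : finType) (cv : V -> nat) (ce : V -> V -> nat)
    (x : V) (p : seq V) : bool :=
  uniq (path_vcols cv x p ++ path_ecols ce x p).

Definition interior (V : finType) (x : V) (p : seq V) : seq V :=
  behead (belast x p).

(* A is (k,d)-connected: for every set S of at most k-1 colours (a sequence of
   length < k) and x, y in A, there is a rainbow path from x to y of length at
   most d whose edges and interior vertices avoid the colours in S. *)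
Definition kd_connected (R : realFieldType) (V : finType) (e : rel V)
    (cv : V -> nat) (ce : V -> V -> nat) (k : nat) (d : R) (A : {set V}) : Prop :=
  forall (S : seq nat) (x y : V), size S < k -> x \in A -> y \in A ->
    exists p : seq V,
      [/\ is_path e x p, last x p = y, rainbow_path cv ce x p,
          ((size p)%:R <= d)%R &
          all (fun c => c \notin S) (path_ecols ce x p) &&
          all (fun v => cv v \notin S) (interior x p)].

Definition outdeg (V : finType) (e : rel V) (v : V) : nat := #|[set w | e v w]|.

(* minimum out-degree; 0 for the empty digraph *)
Definition min_outdeg (V : finType) (e : rel V) : nat :=
  \big[minn/#|V|]_(v : V) outdeg e v.

From HB Require Import structures.
From mathcomp Require Import all_boot all_order all_algebra.
From mathcomp Require Import ring lra zify.
Import Order.TTheory GRing.Theory Num.Theory.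
Set Implicit Arguments. Unset Strict Implicit. Unset Printing Implicit Defensive.

(* Let n = |D|, delta = delta^+(D), and assume k > 0 and eps n < delta, the
   other cases being trivial.  Call a vertex set closed if every vertex outside
   it has fewer than eps^2 n/4 in-neighbours in it, and large if it has more
   than delta/2 vertices, and let M be a smallest closed large set.  By
   minimality every vertex of M has at least eps^2 n/4 in-neighbours in M, and
   double counting the edges into M gives |M| >= delta - eps n/2; hence the
   set A of vertices of M with at most eps n/2 out-neighbours outside M has
   |A| >= delta - eps n.

   Fix x in A, let T_0 be the set of out-neighbours of x in M, and let T_(j+1)
   consist of T_0 and the vertices with at least eps^2 n/8 in-neighbours in
   T_j.  The T_j cannot keep growing by eps^2 n/16, so |T_(i+1)| < |T_i| +
   eps^2 n/16 for some i <= 16/eps^2.  Adding to T_(i+1) the few vertices u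
   with at least eps^2 n/32 in-neighbours a such that xa and au have the same
   colour gives a closed set whose intersection with M contains the large set
   T_0, hence a superset of M; so every vertex of M has at least eps^2 n/8
   in-neighbours in T_i.

   A rainbow path from x to y in A is then built backwards from y, stepping
   from a vertex rich in T_j to one of its in-neighbours in T_(j-1) until an
   out-neighbour of x is reached, after at most i + 3 <= 1280/eps^2 edges.  At
   each step fewer than |S| + 2i + 4 colours are in use; they rule out at most
   three times as many candidates, which n >= 1800k/eps^4 keeps below
   eps^2 n/8. *)

Lemma card_inj_in_mem_le (V : finType) (f : V -> nat) (P : pred V) (F : seq nat) :
  {in P &, injective f} -> #|[set a | P a && (f a \in F)]| <= size F.
Proof.
move=> f_inj; rewrite cardE -(size_map f); apply: uniq_leq_size.
  rewrite map_inj_in_uniq ?enum_uniq // => a b.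
  by rewrite !mem_enum !inE => /andP[Pa _] /andP[Pb _]; exact: f_inj.
by move=> c /mapP[a]; rewrite mem_enum inE => /andP[_ fa] ->.
Qed.

Lemma card_inj_mem_le (V : finType) (f : V -> nat) (F : seq nat) :
  injective f -> #|[set a | f a \in F]| <= size F.
Proof.
move=> f_inj; apply: leq_trans (card_inj_in_mem_le (P := predT) F (in2W f_inj)).
by apply/subset_leq_card/subsetP => a; rewrite !inE.
Qed.

Section RainbowTails.
Variables (V : finType) (e : rel V) (cv : V -> nat) (ce : V -> V -> nat).
Hypothesis colouring : proper_total_colouring e cv ce.
Hypothesis cv_inj : injective cv.

Lemma in_edge_colour_inj u : {in (fun a => e a u) &, injective (fun a => ce a u)}.
Proof.
case: colouring => _ in_proper _ _ a b au bu ceab; apply/eqP/negPn/negP => ab.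
by move: (in_proper u a b au bu ab); rewrite ceab eqxx.
Qed.

Lemma out_edge_colour_inj x : {in (fun a => e x a) &, injective (fun a => ce x a)}.
Proof.
case: colouring => out_proper _ _ _ a b xa xb ceab; apply/eqP/negPn/negP => ab.
by move: (out_proper x a b xa xb ab); rewrite ceab eqxx.
Qed.

Definition path_colours (u : V) (r : seq V) := path_vcols cv u r ++ path_ecols ce u r.

Lemma path_colours_cons a u r :
  perm_eq (path_colours a (u :: r)) (cv a :: ce a u :: path_colours u r).
Proof.
rewrite /path_colours /path_vcols /path_ecols /= perm_cons.
exact/permPl/(perm_catCA (cv u :: map cv r) [:: ce a u]).
Qed.

Lemma mem_path_colours_cons a u r c :
  (c \in path_colours a (u :: r)) =
  [|| c == cv a, c == ce a u | c \in path_colours u r].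
Proof. by rewrite (perm_mem (path_colours_cons a u r)) !in_cons. Qed.

Lemma uniq_path_colours_cons a u r :
  uniq (path_colours a (u :: r)) =
  [&& cv a \notin ce a u :: path_colours u r, ce a u \notin path_colours u r
    & uniq (path_colours u r)].
Proof. by rewrite (perm_uniq (path_colours_cons a u r)) /= andbA. Qed.

Definition avoids_colours (S : seq nat) (x : V) (p : seq V) :=
  all (fun c => c \notin S) (path_ecols ce x p) &&
  all (fun v => cv v \notin S) (interior x p).

Definition good_path (S : seq nat) (x y : V) (p : seq V) :=
  [/\ is_path e x p, last x p = y, rainbow_path cv ce x p & avoids_colours S x p].

(* The final segment u :: r of a good path from x to y, built backwards from
   y; its last vertex y is exempt from avoiding S, and cv x is kept free. *)
Definition rainbow_tail (S : seq nat) (x y u : V) (r : seq V) :=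
  [/\ path e u r, last u r = y, uniq (path_colours u r),
      cv x \notin path_colours u r &
      all (fun c => c \notin S) (path_ecols ce u r) &&
      all (fun v => cv v \notin S) (belast u r)].

Definition used_colours (S : seq nat) (x u : V) (r : seq V) :=
  S ++ cv x :: path_colours u r.

Lemma size_used_colours S x u r :
  size (used_colours S x u r) = (size S + 2 + 2 * size r)%N.
Proof.
rewrite /used_colours /path_colours /path_vcols /path_ecols size_cat /= size_cat.
rewrite size_map size_pairmap; lia.
Qed.

Lemma mem_used_colours S x u r c :
  (c \in used_colours S x u r) = [|| c \in S, c == cv x | c \in path_colours u r].
Proof. by rewrite mem_cat in_cons. Qed.

Lemma rainbow_tail_cons S x y u r a :
  rainbow_tail S x y u r -> e a u ->
  cv a \notin used_colours S x u r -> ce a u \notin used_colours S x u r ->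
  rainbow_tail S x y a (u :: r).
Proof.
case=> pr <- uniq_r x_r /andP[S_edges S_verts] au.
rewrite !mem_used_colours => /norP[Sa /norP[xa ra]] /norP[Sau /norP[xau rau]].
case: colouring => _ _ _ /(_ a u au) /andP[au_a au_u].
split=> //; first by rewrite /= au.
- by rewrite uniq_path_colours_cons in_cons eq_sym (negbTE au_a) ra rau uniq_r.
- by rewrite mem_path_colours_cons eq_sym (negbTE xa) eq_sym (negbTE xau).
- by rewrite /= Sau S_edges Sa.
Qed.

Lemma rainbow_tail_close S x y u r a :
  rainbow_tail S x y u r -> e a u -> e x a ->
  cv a \notin used_colours S x u r -> ce a u \notin used_colours S x u r ->
  ce x a \notin used_colours S x u r -> ce x a != ce a u ->
  good_path S x y (a :: u :: r).
Proof.
move=> tail au xa a_new au_new xa_new xa_au.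
case: (rainbow_tail_cons tail au a_new au_new) => pr <- uniq_r x_r /andP[S_edges S_verts].
move: xa_new; rewrite mem_used_colours => /norP[Sxa /norP[_ rxa]].
case: colouring => _ _ _ /(_ x a xa) /andP[xa_x xa_a].
have rainbow : uniq (path_colours x (a :: u :: r)).
  rewrite uniq_path_colours_cons uniq_r andbT in_cons eq_sym (negbTE xa_x) x_r.
  by rewrite mem_path_colours_cons (negbTE xa_a) (negbTE xa_au) (negbTE rxa).
split=> //.
- apply/andP; split; first by rewrite /= xa.
  rewrite -(map_inj_uniq cv_inj).
  by move: rainbow; rewrite /path_colours cat_uniq => /andP[].
- by rewrite /avoids_colours /= Sxa; move: S_edges S_verts => /= -> ->.
Qed.

End RainbowTails.

Section InDegrees.
Variables (V : finType) (e : rel V).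

Definition indeg_from (T : {set V}) (w : V) := #|[set a in T | e a w]|.

Lemma card_sep_sum (Q : {set V}) (P : pred V) :
  #|[set w in Q | P w]| = \sum_(w in Q) P w.
Proof.
rewrite -sum1_card (eq_bigl (fun w => (w \in Q) && P w)) => [|w]; last by rewrite inE.
by rewrite big_mkcondr; apply: eq_bigr => w _; case: (P w).
Qed.

Lemma double_count_edges (P Q : {set V}) :
  \sum_(v in P) #|[set w in Q | e v w]| = \sum_(w in Q) indeg_from P w.
Proof.
rewrite /indeg_from.
under eq_bigr do rewrite card_sep_sum.
under [RHS]eq_bigr do rewrite card_sep_sum.
exact: exchange_big.
Qed.

Lemma outdeg_setID v (M : {set V}) :
  outdeg e v = #|[set w in M | e v w]| + #|[set w in ~: M | e v w]|.
Proof.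
rewrite /outdeg -(cardsID M [set w | e v w]).
by congr (_ + _); apply: eq_card => w; rewrite !inE andbC.
Qed.

Lemma min_outdeg_le v : min_outdeg e <= outdeg e v.
Proof.
rewrite /min_outdeg; elim: (index_enum V) (mem_index_enum v) => // a s IH.
rewrite in_cons big_cons => /orP[/eqP<-|/IH]; first exact: geq_minl.
exact: leq_trans (geq_minr _ _).
Qed.

Lemma min_outdeg_le_card : min_outdeg e <= #|V|.
Proof.
apply: (big_ind (fun m => m <= #|V|)) => // [a b ha _|v _]; last exact: max_card.
exact: leq_trans (geq_minl a b) ha.
Qed.

Lemma indeg_fromS (T T' : {set V}) w :
  T \subset T' -> indeg_from T w <= indeg_from T' w.
Proof.
move=> TT'; apply/subset_leq_card/subsetP => a; rewrite !inE => /andP[aT ->].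
by rewrite (subsetP TT' a aT).
Qed.

Lemma indeg_from_setD (T T' : {set V}) w :
  indeg_from T' w <= indeg_from T w + #|T' :\: T|.
Proof.
apply: leq_trans (leq_card_setU _ _); apply/subset_leq_card/subsetP => a.
by rewrite !inE => /andP[-> ->]; case: (a \in T).
Qed.

End InDegrees.

Local Open Scope ring_scope.

Lemma quadratic_le_half (R : realFieldType) (m d c : R) :
  0 <= c -> c < d -> m * d <= d / 2 * m + c ^+ 2 / 4 -> m <= d / 2.
Proof.
move=> c_ge0 c_lt_d le_md; rewrite leNgt; apply/negP => lt_m.
have : 0 < (m - d / 2) * d by apply: mulr_gt0; lra.
have : 0 < (d - c) * (d + c) by apply: mulr_gt0; lra.
rewrite expr2 in le_md; nra.
Qed.

Lemma quadratic_ge_root (R : realFieldType) (m d c : R) :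
  0 < c -> c < d -> d / 2 < m -> m * d <= m * m + c ^+ 2 / 4 -> d - c / 2 <= m.
Proof.
move=> c_gt0 c_lt_d lt_m le_md; rewrite leNgt; apply/negP => gt_m.
have : d / 2 * (c / 2) < m * (d - m).
  apply: (@lt_le_trans _ _ (m * (c / 2))); first by rewrite ltr_pM2r //; lra.
  rewrite ler_pM2l; lra.
have : c / 2 * (c / 2) < d / 2 * (c / 2) by rewrite ltr_pM2r; lra.
rewrite expr2 in le_md; nra.
Qed.

Lemma slow_step_exists (R : realFieldType) (f : nat -> nat) (b : nat) (h : R) :
  0 < h -> (forall i, (f i <= b)%N) ->
  exists2 i : nat, i%:R * h <= b%:R & (f i.+1)%:R < (f i)%:R + h.
Proof.
move=> h_gt0 f_le_b; pose slow i := (f i.+1)%:R < (f i)%:R + h.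
have [i slow_i] : exists i, slow i.
  case: (boolP [exists i : 'I_b.+1, slow i]) => [/existsP[i]|]; first by exists i.
  rewrite negb_exists => /forallP fast; exfalso.
  have grow j : (j <= b.+1)%N -> (j <= f j)%N.
    elim: j => [|j IH] // lt_jb; apply: leq_ltn_trans (IH (ltnW lt_jb)) _.
    have := fast (Ordinal lt_jb); rewrite /slow -leNgt -(ltr_nat R) => ge_f.
    by apply: lt_le_trans ge_f; lra.
  by have := grow _ (leqnn _); rewrite leqNgt ltnS f_le_b.
have [{}i {}slow_i min_i] := ex_minnP (ex_intro slow i slow_i).
exists i => //.
have grow j : (j <= i)%N -> j%:R * h <= (f j)%:R.
  elim: j => [|j IH] lt_ji; first by rewrite mul0r.
  have : ~~ slow j by apply/negP => /min_i; rewrite leqNgt lt_ji.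
  rewrite /slow -leNgt mulrSr mulrDl mul1r; have := IH (ltnW lt_ji); lra.
by apply: le_trans (grow _ (leqnn i)) _; rewrite ler_nat.
Qed.

Section ConnectedSet.
Variables (R : realFieldType) (V : finType) (e : rel V) (cv : V -> nat) (ce : V -> V -> nat).
Variables (eps : R) (k : nat).
Hypothesis colouring : proper_total_colouring e cv ce.
Hypothesis cv_inj : injective cv.
Hypothesis eps_gt0 : 0 < eps.
Hypothesis k_gt0 : (0 < k)%N.
Hypothesis eps_n_lt_delta : eps * #|V|%:R < (min_outdeg e)%:R.
Hypothesis n_large : 1800 * k%:R / eps ^+ 4 <= #|V|%:R.

Local Notation nR := (#|V|%:R : R).
Local Notation dR := ((min_outdeg e)%:R : R).
Local Notation q := (eps ^+ 2).

Lemma cardV_gt0 : 0 < nR.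
Proof.
have := min_outdeg_le_card e; rewrite -(ler_nat R) => le_dn.
rewrite ltr0n lt0n; apply/negP => /eqP n0.
by move: le_dn eps_n_lt_delta; rewrite n0 mulr0 => /le_lt_trans/[apply]; rewrite ltxx.
Qed.

Lemma eps_lt1 : eps < 1.
Proof.
have := min_outdeg_le_card e; rewrite -(ler_nat R) => le_dn.
by rewrite -(ltr_pM2r cardV_gt0) mul1r; apply: lt_le_trans le_dn.
Qed.

Lemma sqr_eps_lt1 : q < 1.
Proof. by rewrite expr2; have := eps_lt1; have := eps_gt0; nra. Qed.

Lemma qn_gt0 : 0 < q * nR.
Proof. by rewrite mulr_gt0 ?exprn_gt0 ?cardV_gt0. Qed.

Lemma sum_indeg_from_ge (M : {set V}) :
  #|M|%:R * dR <= \sum_(w : V) ((indeg_from e M w)%:R : R).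
Proof.
rewrite -natrM -natr_sum ler_nat.
have -> : (\sum_w indeg_from e M w = \sum_(w in [set: V]) indeg_from e M w)%N.
  by apply: eq_bigl => w; rewrite inE.
rewrite -double_count_edges -sum_nat_const; apply: leq_sum => v _.
apply: leq_trans (min_outdeg_le e v) _.
by apply/subset_leq_card/subsetP => w; rewrite !inE.
Qed.

Lemma sum_le_card_mul (P : pred V) (F : V -> R) (c : R) :
  0 <= c -> (forall w, P w -> F w <= c) -> \sum_(w | P w) F w <= nR * c.
Proof.
move=> c_ge0 le_Fc; apply: le_trans (ler_sum _ le_Fc) _.
by rewrite sumr_const -[_ *+ _]mulr_natl ler_wpM2r // ler_nat max_card.
Qed.

Lemma sum_indeg_from_le (M D : {set V}) :
  (forall w, w \notin D -> ((indeg_from e M w)%:R : R) <= q * nR / 4) ->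
  \sum_(w : V) ((indeg_from e M w)%:R : R) <= #|D|%:R * #|M|%:R + (eps * nR) ^+ 2 / 4.
Proof.
move=> sparse; rewrite (bigID (mem D)) /=; apply: lerD.
  rewrite mulr_natl -sumr_const; apply: ler_sum => w _; rewrite ler_nat.
  by apply/subset_leq_card/subsetP => a; rewrite inE => /andP[].
have -> : (eps * nR) ^+ 2 / 4 = nR * (q * nR / 4) by rewrite exprMn; field.
by apply: sum_le_card_mul sparse; have := qn_gt0; lra.
Qed.

Definition closed_set (D : {set V}) :=
  [forall w, (w \notin D) ==> ((indeg_from e D w)%:R < q * nR / 4)].
Definition large_set (D : {set V}) := dR / 2 < #|D|%:R.

Lemma closed_setP (D : {set V}) :
  reflect (forall w, w \notin D -> (indeg_from e D w)%:R < q * nR / 4) (closed_set D).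
Proof.
apply: (iffP forallP) => [sparse w|sparse w]; first by move: (sparse w) => /implyP.
exact/implyP/sparse.
Qed.

Lemma closed_setT : closed_set setT.
Proof. by apply/closed_setP => w; rewrite inE. Qed.

Lemma large_setT : large_set setT.
Proof.
rewrite /large_set cardsT; have := min_outdeg_le_card e; rewrite -(ler_nat R).
have := cardV_gt0; lra.
Qed.

Lemma closed_setI (D1 D2 : {set V}) : closed_set D1 -> closed_set D2 -> closed_set (D1 :&: D2).
Proof.
move=> /closed_setP closed1 /closed_setP closed2.
apply/closed_setP => w; rewrite inE negb_and => /orP[w1|w2].
  by apply: le_lt_trans (closed1 _ w1); rewrite ler_nat indeg_fromS ?subsetIl.
by apply: le_lt_trans (closed2 _ w2); rewrite ler_nat indeg_fromS ?subsetIr.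
Qed.

Definition core := [arg min_(D < setT | closed_set D && large_set D) #|D|].

Lemma core_spec :
  [/\ closed_set core, large_set core &
      forall D, closed_set D -> large_set D -> #|core| <= #|D|]%N.
Proof.
rewrite /core; case: arg_minnP => [|D /andP[closed_D large_D] min_D].
  by rewrite closed_setT large_setT.
by split=> // D' closed' large'; apply: min_D; rewrite closed' large'.
Qed.

Lemma core_minimal (W : {set V}) : closed_set W -> large_set (core :&: W) -> core \subset W.
Proof.
case: core_spec => closed_core _ min_core closed_W large_cW.
have le_core := min_core _ (closed_setI closed_core closed_W) large_cW.
by apply/setIidPl/eqP; rewrite eqEcard subsetIl.
Qed.

Lemma core_indeg w : w \in core -> q * nR / 4 <= (indeg_from e core w)%:R.
Proof.
case: core_spec => /closed_setP closed_core large_core min_core w_core.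
set D := [set w in core | q * nR / 4 <= (indeg_from e core w)%:R].
have sparse u : u \notin D -> (indeg_from e core u)%:R < q * nR / 4.
  rewrite inE negb_and -ltNge => /orP[/closed_core //|//].
have D_core : D \subset core by apply/subsetP => a; rewrite inE => /andP[].
have closed_D : closed_set D.
  apply/closed_setP => u /sparse; apply: le_lt_trans.
  by rewrite ler_nat indeg_fromS.
case large_D : (large_set D).
  have le_core := min_core _ closed_D large_D.
  have /eqP D_eq : D == core by rewrite eqEcard D_core.
  have : w \in D by rewrite D_eq.
  by rewrite inE => /andP[].
move: large_D => /negbT; rewrite /large_set -leNgt => small_D.
have le_sum := le_trans (sum_indeg_from_ge core)
                        (sum_indeg_from_le (fun u nDu => ltW (sparse u nDu))).
have eps_n_ge0 : 0 <= eps * nR by rewrite mulr_ge0 ?ler0n ?ltW.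
have : #|core|%:R <= dR / 2.
  apply: (quadratic_le_half eps_n_ge0 eps_n_lt_delta).
  by apply: le_trans le_sum _; rewrite lerD2r ler_wpM2r.
by move: large_core; rewrite /large_set; lra.
Qed.

Lemma card_core_ge : dR - eps * nR / 2 <= #|core|%:R.
Proof.
case: core_spec => /closed_setP closed_core large_core _.
have eps_n_gt0 : 0 < eps * nR by rewrite mulr_gt0 ?cardV_gt0.
apply: (quadratic_ge_root eps_n_gt0 eps_n_lt_delta large_core).
exact: le_trans (sum_indeg_from_ge core)
                (sum_indeg_from_le (fun u nu => ltW (closed_core u nu))).
Qed.

Definition out_of_core (v : V) := [set w in ~: core | e v w].

Definition core_low_out := [set y in core | (#|out_of_core y|%:R : R) <= eps * nR / 2].

Lemma core_low_out_sub : core_low_out \subset core.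
Proof. by apply/subsetP => a; rewrite inE => /andP[]. Qed.

Lemma card_core_high_out : #|core :\: core_low_out|%:R <= eps * nR / 2.
Proof.
case: core_spec => /closed_setP closed_core _ _.
have eps_n_gt0 : 0 < eps * nR / 2 by rewrite divr_gt0 ?mulr_gt0 ?cardV_gt0.
rewrite -(ler_pM2r eps_n_gt0).
have high_out : #|core :\: core_low_out|%:R * (eps * nR / 2) <=
                \sum_(v in core :\: core_low_out) (#|out_of_core v|%:R : R).
  rewrite mulr_natl -sumr_const; apply: ler_sum => v.
  rewrite inE => /andP[v_high v_core].
  by move: v_high; rewrite inE v_core -ltNge => /ltW.
have total_out : \sum_(v in core) (#|out_of_core v|%:R : R) <= nR * (q * nR / 4).
  rewrite -natr_sum double_count_edges natr_sum.
  apply: sum_le_card_mul => [|w]; first by have := qn_gt0; lra.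
  by rewrite inE => /closed_core/ltW.
have -> : eps * nR / 2 * (eps * nR / 2) = nR * (q * nR / 4) by field.
apply: le_trans high_out (le_trans _ total_out).
rewrite [X in _ <= X](big_setID core_low_out) /= (setIidPr core_low_out_sub) lerDr.
by apply: sumr_ge0 => v _; exact: ler0n.
Qed.

Lemma card_core_low_out : dR - eps * nR <= #|core_low_out|%:R.
Proof.
have := card_core_ge; have := card_core_high_out.
rewrite cardsD (setIidPr core_low_out_sub) natrB ?subset_leq_card ?core_low_out_sub //.
lra.
Qed.

Definition out_core (x : V) := [set a in core | e x a].
Definition rich (T : {set V}) := [set w | q * nR / 8 <= (indeg_from e T w)%:R].
Fixpoint layer (x : V) (j : nat) :=
  if j is j'.+1 then out_core x :|: rich (layer x j') else out_core x.

Lemma out_core_large x : x \in core_low_out -> large_set (out_core x).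
Proof.
rewrite inE => /andP[_ low_x].
have := min_outdeg_le e x; rewrite (outdeg_setID e x core) -(ler_nat R) natrD.
by rewrite /large_set; move: low_x eps_n_lt_delta; rewrite /out_of_core; lra.
Qed.

Lemma richS (T T' : {set V}) : T \subset T' -> rich T \subset rich T'.
Proof.
move=> TT'; apply/subsetP => w; rewrite !inE => /le_trans; apply.
by rewrite ler_nat indeg_fromS.
Qed.

Lemma layer_subS x j : layer x j \subset layer x j.+1.
Proof.
elim: j => [|j IH] /=; first exact: subsetUl.
by rewrite setUS // richS.
Qed.

Lemma out_core_layer x j : out_core x \subset layer x j.
Proof. by case: j => [|j] /=; rewrite ?subsetUl. Qed.

Lemma layer_stall x :
  exists2 i : nat, i%:R * (q * nR / 16) <= nR &
    #|layer x i.+1|%:R < #|layer x i|%:R + q * nR / 16.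
Proof.
apply: slow_step_exists => [|i]; last exact: max_card.
by have := qn_gt0; lra.
Qed.

Definition mono_mid (x u : V) := [set a | e x a && e a u && (ce x a == ce a u)].
(* At a heavy u there are too many such a to avoid when closing the path, so
   heavy vertices are set aside, at the cost of at most 32/eps^2 of them. *)
Definition mono_heavy (x : V) := [set u | q * nR / 32 <= #|mono_mid x u|%:R].

Lemma card_mono_ends_le1 x a : (#|[set u in [set: V] | a \in mono_mid x u]| <= 1)%N.
Proof.
apply: leq_trans (card_inj_in_mem_le [:: ce x a] (out_edge_colour_inj (x := a) colouring)).
apply/subset_leq_card/subsetP => u; rewrite !inE /= => /andP[/andP[_ ->] /eqP ->].
by rewrite eqxx.
Qed.

Lemma card_mono_heavy_mul x : #|mono_heavy x|%:R * (q * nR / 32) <= nR.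
Proof.
have sum_mono : (\sum_u #|mono_mid x u| <= #|V|)%N.
  have -> : (\sum_u #|mono_mid x u| =
             \sum_(u in [set: V]) #|[set a in [set: V] | a \in mono_mid x u]|)%N.
    apply: eq_big => [u|u _]; first by rewrite inE.
    by apply: eq_card => a; rewrite !inE.
  under eq_bigr do rewrite card_sep_sum.
  rewrite exchange_big -[#|V|]cardsT -sum1_card; apply: leq_sum => a _.
  by rewrite -card_sep_sum card_mono_ends_le1.
apply: le_trans (_ : ((\sum_u #|mono_mid x u|)%N%:R : R) <= nR); last by rewrite ler_nat.
rewrite natr_sum (bigID (mem (mono_heavy x))) /= mulr_natl -sumr_const.
apply: ler_wpDr; first by apply: sumr_ge0 => u _; exact: ler0n.
by apply: ler_sum => u; rewrite inE.
Qed.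

Lemma eps4_n_large : 1800 * k%:R <= q * q * nR.
Proof.
have eps4_gt0 : 0 < eps ^+ 4 by rewrite exprn_gt0.
by rewrite -exprD [X in _ <= X]mulrC -ler_pdivrMr.
Qed.

Lemma card_mono_heavy x : #|mono_heavy x|%:R <= q * nR / 16.
Proof.
have := card_mono_heavy_mul x; have := eps4_n_large; have := cardV_gt0.
have q_gt0 : 0 < q by rewrite exprn_gt0.
have : 1 <= (k%:R : R) by rewrite ler1n.
set b := (#|mono_heavy x|%:R : R) => k_ge1 n_gt0 large b_le.
have bq_le : b * q <= 32.
  by rewrite -(ler_pM2r n_gt0); move: b_le; lra.
rewrite leNgt; apply/negP => big_b.
have : q * nR / 16 * q < b * q by rewrite ltr_pM2r.
nra.
Qed.

Definition hull (x : V) (i : nat) := layer x i.+1 :|: mono_heavy x.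

Lemma large_core_hull x i : x \in core_low_out -> large_set (core :&: hull x i).
Proof.
move=> /out_core_large; rewrite /large_set => /lt_le_trans; apply.
rewrite ler_nat; apply/subset_leq_card/subsetP => a a_out.
rewrite in_setI in_setU (subsetP (out_core_layer x i.+1)) //.
by move: a_out; rewrite inE => /andP[->].
Qed.

Section Stall.
Variables (x : V) (i : nat).
Hypothesis stall : (#|layer x i.+1|%:R : R) < #|layer x i|%:R + q * nR / 16.

Lemma card_hull_gap : #|hull x i :\: layer x i|%:R < q * nR / 8.
Proof.
have gap_split : (#|hull x i :\: layer x i| <=
                  #|layer x i.+1 :\: layer x i| + #|mono_heavy x|)%N.
  apply: leq_trans (leq_card_setU _ _); apply/subset_leq_card/subsetP => a.
  by rewrite !inE => /andP[-> /orP[->|->]]; rewrite ?orbT.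
have card_step : #|layer x i.+1 :\: layer x i| = (#|layer x i.+1| - #|layer x i|)%N.
  by rewrite cardsD (setIidPr (layer_subS x i)).
have := card_mono_heavy x; have := stall; move: gap_split.
rewrite -(ler_nat R) natrD card_step natrB ?subset_leq_card ?layer_subS //.
lra.
Qed.

Lemma closed_hull : closed_set (hull x i).
Proof.
apply/closed_setP => w w_out.
have : w \notin rich (layer x i).
  by apply: contra w_out => w_rich; rewrite /hull /= !in_setU w_rich !orbT.
rewrite inE -ltNge => w_poor.
have := indeg_from_setD e (layer x i) (hull x i) w; rewrite -(ler_nat R) natrD.
by have := card_hull_gap; lra.
Qed.

End Stall.

Lemma core_sub_rich_layer x : x \in core_low_out ->
  exists2 i : nat, i%:R * (q * nR / 16) <= nR & core \subset rich (layer x i).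
Proof.
move=> x_low; have [i i_small stall] := layer_stall x.
exists i => //; apply/subsetP => w w_core; rewrite inE.
have core_hull := core_minimal (closed_hull stall) (large_core_hull i x_low).
have : #|core :\: layer x i|%:R <= #|hull x i :\: layer x i|%:R :> R.
  by rewrite ler_nat subset_leq_card // setSD.
have := indeg_from_setD e (layer x i) core w; rewrite -(ler_nat R) natrD.
by have := core_indeg w_core; have := card_hull_gap stall; lra.
Qed.

Section BackwardPaths.
Variables (S : seq nat) (x y : V) (i : nat).
Hypothesis S_small : (size S < k)%N.
Hypothesis i_small : i%:R * (q * nR / 16) <= nR.

Local Notation used u r := (used_colours cv ce S x u r).

Lemma colour_budget :
  (3 * (size S + 2 * i + 4))%N%:R + #|mono_heavy x|%:R + q * nR / 32 <= q * nR / 8.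
Proof.
have q_gt0 : 0 < q by rewrite exprn_gt0.
have q_lt1 := sqr_eps_lt1.
have n_gt0 := cardV_gt0; have large := eps4_n_large.
have heavy := card_mono_heavy_mul x.
have k_ge : (size S)%:R + 1 <= k%:R :> R by rewrite natr1 ler_nat.
rewrite -(ler_pM2r q_gt0) natrM !natrD addr0.
set b := (#|mono_heavy x|%:R : R) in heavy *; set s := ((size S)%:R : R) in k_ge *.
have iq : i%:R * q <= 16 by rewrite -(ler_pM2r n_gt0); have := i_small; lra.
have bq : b * q <= 32 by rewrite -(ler_pM2r n_gt0); lra.
have sq : s * q <= s by rewrite ler_piMr ?ler0n ?ltW.
have := ler0n R (size S); have := ler0n R i; nra.
Qed.

(* A candidate a fails if cv a, ce a u or ce x a is already used: by
   injectivity of these colourings each rules out at most |used u r| vertices. *)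
Lemma pick_in_neighbour (T E : {set V}) u r :
  (size r <= i.+1)%N -> q * nR / 8 <= (indeg_from e T u)%:R ->
  #|E|%:R < #|mono_heavy x|%:R + q * nR / 32 ->
  exists a, [/\ a \in T, e a u, a \notin E,
                (cv a \notin used u r) && (ce a u \notin used u r) &
                e x a -> ce x a \notin used u r].
Proof.
move=> r_small u_rich E_small.
have F_small : (size (used u r) <= size S + 2 * i + 4)%N.
  by rewrite size_used_colours; lia.
set excluded := [set a | cv a \in used u r] :|: [set a | e a u && (ce a u \in used u r)]
            :|: [set a | e x a && (ce x a \in used u r)] :|: E.
have : (#|excluded| < indeg_from e T u)%N.
  have card_cv := card_inj_mem_le (used u r) cv_inj.
  have card_in := card_inj_in_mem_le (used u r) (in_edge_colour_inj colouring (u := u)).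
  have card_out := card_inj_in_mem_le (used u r) (out_edge_colour_inj colouring (x := x)).
  rewrite -(ltr_nat R); apply: le_lt_trans (_ : _ <= (3 * (size S + 2 * i + 4))%N%:R
                                              + #|E|%:R) _.
    rewrite -natrD ler_nat; apply: leq_trans (leq_card_setU _ _) _.
    rewrite leq_add2r; apply: leq_trans (leq_card_setU _ _) _.
    apply: leq_trans (leq_add (leq_card_setU _ _) (leqnn _)) _.
    lia.
  by have := colour_budget; lra.
move=> lt_excluded.
have [a] : exists2 a, a \in [set a in T | e a u] & a \notin excluded.
  apply/subsetPn; apply: contraTN lt_excluded => /subset_leq_card.
  by rewrite /indeg_from leqNgt.
rewrite !inE => /andP[aT au]; rewrite !negb_or au /=.
move=> /andP[/andP[/andP[a_cv a_in] a_out] aE].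
exists a; split=> //; first by rewrite a_cv.
by move=> xa; move: a_out; rewrite xa.
Qed.

Lemma step_back (T : {set V}) u r :
  (size r <= i.+1)%N -> u \in rich T -> u \notin mono_heavy x ->
  rainbow_tail e cv ce S x y u r ->
  exists a, [/\ a \in T, a \notin mono_heavy x, rainbow_tail e cv ce S x y a (u :: r) &
                a \in out_core x -> good_path e cv ce S x y [:: a, u & r]].
Proof.
move=> r_small u_rich u_light tail.
have E_small : #|mono_mid x u :|: mono_heavy x|%:R < #|mono_heavy x|%:R + q * nR / 32.
  apply: le_lt_trans (_ : _ <= (#|mono_mid x u| + #|mono_heavy x|)%N%:R) _.
    by rewrite ler_nat leq_card_setU.
  by move: u_light; rewrite inE -ltNge natrD; lra.
move: u_rich; rewrite inE => u_rich.
have [a [aT au]] := pick_in_neighbour r_small u_rich E_small.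
rewrite in_setU negb_or => /andP[a_mono a_light] /andP[a_new au_new] xa_new.
exists a; split=> //; first exact: rainbow_tail_cons.
move=> a_out; have xa : e x a by move: a_out; rewrite inE => /andP[].
apply: rainbow_tail_close => //; first exact: xa_new.
by move: a_mono; rewrite inE xa au.
Qed.

(* A heavy y cannot be handled by [step_back]; step first to a light
   in-neighbour in the core, which is not joined to x directly. *)
Lemma step_into_core :
  x != y -> y \in core ->
  exists a, [/\ a \in core, a \notin mono_heavy x & rainbow_tail e cv ce S x y a [:: y]].
Proof.
move=> xy y_core.
have tail : rainbow_tail e cv ce S x y y [::].
  by split=> //; rewrite /path_colours /= inE (inj_eq cv_inj).
have y_rich : q * nR / 8 <= (indeg_from e core y)%:R.
  by have := core_indeg y_core; have := qn_gt0; lra.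
have E_small : #|mono_heavy x|%:R < #|mono_heavy x|%:R + q * nR / 32.
  by have := qn_gt0; lra.
have [a [a_core ay a_light /andP[a_new ay_new] _]] :=
  pick_in_neighbour (r := [::]) (isT : (size [::] <= i.+1)%N) y_rich E_small.
by exists a; split=> //; apply: rainbow_tail_cons.
Qed.

Lemma build_back j u r :
  u \in rich (layer x j) -> u \notin mono_heavy x -> rainbow_tail e cv ce S x y u r ->
  (size r + j <= i + 1)%N ->
  exists2 p, good_path e cv ce S x y p & (size p <= i + 3)%N.
Proof.
elim: j u r => [|j IH] u r u_rich u_light tail r_small.
  have r_small' : (size r <= i.+1)%N by lia.
  have [a [a_out _ _ close]] := step_back r_small' u_rich u_light tail.
  by exists [:: a, u & r]; [exact: close | rewrite /=; lia].
have r_small' : (size r <= i.+1)%N by lia.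
have [a [a_layer a_light tail' close]] := step_back r_small' u_rich u_light tail.
case/setUP: a_layer => [a_out|a_rich].
  by exists [:: a, u & r]; [exact: close | rewrite /=; lia].
by apply: (IH a (u :: r) a_rich a_light tail'); rewrite /=; lia.
Qed.

End BackwardPaths.

Lemma core_low_out_paths S x y :
  (size S < k)%N -> x \in core_low_out -> y \in core_low_out ->
  exists2 p, good_path e cv ce S x y p & (size p)%:R <= 1280 / q.
Proof.
move=> S_small x_low y_low.
have q_gt0 : 0 < q by rewrite exprn_gt0.
have [<-|xy] := eqVneq x y.
  by exists [::]; rewrite ?divr_ge0 ?sqr_ge0.
have [i i_small core_rich] := core_sub_rich_layer x_low.
have y_core := subsetP core_low_out_sub y y_low.
have [p good_p size_p] : exists2 p, good_path e cv ce S x y p & (size p <= i + 3)%N.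
  case: (boolP (y \in mono_heavy x)) => [_|y_light].
    have [a [a_core a_light tail]] := step_into_core S_small i_small xy y_core.
    apply: (build_back S_small i_small (subsetP core_rich a a_core) a_light tail).
    by rewrite addnC.
  have tail : rainbow_tail e cv ce S x y y [::].
    by split=> //; rewrite /path_colours /= inE (inj_eq cv_inj).
  apply: (build_back S_small i_small (subsetP core_rich y y_core) y_light tail).
  by rewrite add0n leq_addr.
exists p => //; apply: le_trans (_ : (i + 3)%N%:R <= _); first by rewrite ler_nat.
have iq : i%:R * q <= 16 by rewrite -(ler_pM2r cardV_gt0); move: i_small; lra.
by rewrite natrD ler_pdivlMr //; have := sqr_eps_lt1; lra.
Qed.

Lemma kd_connected_core_low_out : kd_connected e cv ce k (1280 / q) core_low_out.
Proof.
move=> S x y S_small x_low y_low.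
have [p [path_p last_p rainbow_p avoids_p] size_p] :=
  core_low_out_paths S_small x_low y_low.
by exists p; split.
Qed.

End ConnectedSet.

Theorem mainTheorem7 (R : realFieldType) (eps : R) (k : nat)
    (V : finType) (e : rel V) (cv : V -> nat) (ce : V -> V -> nat) :
  0 < eps ->
  digraph e ->
  proper_total_colouring e cv ce ->
  rainbow_vertex_set cv ->
  1800 * k%:R / eps ^+ 4 <= #|V|%:R ->
  exists A : {set V},
    kd_connected e cv ce k (1280 / eps ^+ 2) A /\
    (min_outdeg e)%:R - eps * #|V|%:R <= #|A|%:R.
Proof.
move=> eps_gt0 _ colouring cv_inj n_large.
have eps_n_ge0 : 0 <= eps * #|V|%:R by rewrite mulr_ge0 ?ler0n ?ltW.
have [k0|k_gt0] := posnP k.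
  exists setT; split; first by move=> S x y; rewrite k0.
  by rewrite cardsT; have := min_outdeg_le_card e; rewrite -(ler_nat R); lra.
have [delta_small|eps_n_lt_delta] := lerP (min_outdeg e)%:R (eps * #|V|%:R).
  by exists set0; split=> [S x y _|]; rewrite ?inE // cards0; lra.
exists (core_low_out e eps); split.
  exact: kd_connected_core_low_out colouring cv_inj eps_gt0 k_gt0 eps_n_lt_delta n_large.
exact: card_core_low_out eps_gt0 eps_n_lt_delta.
Qed.
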